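(* Let $\mathcal{M}_{\mathbb{P}}=(\mathcal{M},\mathbb{P})$ be an uncertain parametric MDP, $\varphi$ a specification with a fixed threshold $\lambda$, and $\mathcal{U}_N$ a set of $N\ge1$ parameter instantiations sampled independently from $\mathbb{P}$. Let $N_{\neg\varphi}=|\{u\in\mathcal{U}_N:\mathcal{M}[u]\not\models\varphi\}|$ be the number of violating samples. Choose a confidence probability $\beta\in(0,1)$. Define $t^*(N)=0$, and for $k=0,\dots,N-1$ let $t^*(k)$ be the solution $t$ of \[\frac{1-\beta}{N}=\sum_{i=0}^{k}\binom{N}{i}(1-t)^i t^{N-i}.\] Then \[\mathbb{P}^N\Big\{F(\mathcal{M}_{\mathbb{P}},\varphi)\ \ge\ t^*(N_{\neg\varphi})\Big\}\ \ge\ \beta .\]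
   Context: A parametric MDP (pMDP) is $\mathcal{M}=(S,\mathit{Act},s_I,V,\mathcal{P})$ with finite state set $S$, finite action set $\mathit{Act}$, initial state $s_I$, finite parameter set $V$, and transition function $\mathcal{P}:S\times\mathit{Act}\times S\to\mathbb{Q}[V]$. The parameter space $\mathcal{V}_{\mathcal{M}}$ consists of instantiations $u:V\to\mathbb{R}$; $\mathcal{M}[u]$ is the MDP obtained by evaluating the polynomials at $u$, assumed well-defined and graph-preserving (nonzero transitions get values in $(0,1]$). An uncertain pMDP is $\mathcal{M}_{\mathbb{P}}=(\mathcal{M},\mathbb{P})$ with $\mathbb{P}$ a (possibly unknown) probability distribution over $\mathcal{V}_{\mathcal{M}}$. A specification $\varphi$ consists of a measure on MDPs (e.g. maximal/minimal reachability probability, expected reward), a comparison operator in $\{<,\le,\ge,>\}$ and a threshold $\lambda$; $\mathcal{M}[u]\models\varphi$ means the measure's value on $\mathcal{M}[u]$ compares to $\lambda$ as prescribed. The satisfaction probability is $F(\mathcal{M}_{\mathbb{P}},\varphi)=\int_{\mathcal{V}_{\mathcal{M}}}I_\varphi(u)\,d\mathbb{P}(u)$ with $I_\varphi(u)=1$ iff $\mathcal{M}[u]\models\varphi$, else $0$ (assumed measurable). $\mathbb{P}^N$ is the $N$-fold product measure governing $\mathcal{U}_N$. *)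

From HB Require Import structures.
From mathcomp Require Import all_boot all_order all_algebra.
From mathcomp Require Import all_classical all_reals all_analysis.
From mathcomp Require mpoly.
Import -(notations) mpoly.

Set Implicit Arguments.
Unset Strict Implicit.
Unset Printing Implicit Defensive.
Import Order.TTheory GRing.Theory Num.Theory.
Local Open Scope classical_set_scope.
Local Open Scope ring_scope.

(* Parametric MDPs.  The parameter set V is 'I_nV (nV parameters);    *)
(* transitions are polynomials in Q[V] = {mpoly rat[nV]}.             *)
Record pMDP (nV : nat) := PMDP {
  pS : finType;
  pAct : finType;
  p_init : pS;
  pP : pS -> pAct -> pS -> mpoly.mpoly nV rat
}.
Arguments pP {nV} p _ _ _.
Arguments p_init {nV} p.

Record MDP (R : realType) (S Act : finType) := MkMDP {
  m_init : S;
  m_P : S -> Act -> S -> R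
}.

(* Instantiations u : V -> R, represented as nV.-tuples of reals, so that
   the parameter space carries the (product) Borel sigma-algebra of the library. *)
Definition param_space (R : realType) (nV : nat) := (nV.-tuple R)%type.

Definition peval (R : realType) (nV : nat) (p : mpoly.mpoly nV rat)
  (u : param_space R nV) : R :=
  mpoly.mmap (fun q : rat => ratr q) (fun i => tnth u i) p.

Definition instantiate (R : realType) (nV : nat) (M : pMDP nV)
  (u : param_space R nV) : MDP R (pS M) (pAct M) :=
  MkMDP (p_init M) (fun s a s' => peval (pP M s a s') u).

(* M[u] is well-defined: for each state and action, the action is either
   not enabled (all its transition polynomials are 0) or the evaluated
   transitions form a probability distribution;
   graph-preserving: nonzero transitions get values in (0,1]. *)
Definition well_defined_graph_preserving (R : realType) (nV : nat)
  (M : pMDP nV) (u : param_space R nV) : Prop :=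
  (forall s a, (forall s', pP M s a s' = 0) \/
               \sum_(s' : pS M) peval (pP M s a s') u = 1) /\
  (forall s a s', pP M s a s' != 0 ->
     0 < peval (pP M s a s') u <= 1).

(* Specifications: a measure on MDPs (e.g. max/min reachability probability,
   expected reward; extended-real valued), a comparison operator and a
   threshold lambda. *)
Inductive cmp_op := CLt | CLe | CGe | CGt.

Record spec (R : realType) (S Act : finType) := Spec {
  sp_measure : MDP R S Act -> \bar R;
  sp_cmp : cmp_op;
  sp_threshold : R
}.

Definition cmp_eval (R : realType) (c : cmp_op) (x : \bar R) (l : R) : bool :=
  match c with
  | CLt => (x < l%:E)%E
  | CLe => (x <= l%:E)%E
  | CGe => (l%:E <= x)%E
  | CGt => (l%:E < x)%E
  end.

Definition models (R : realType) (S Act : finType) (M : MDP R S Act)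
  (phi : spec R S Act) : bool :=
  cmp_eval (sp_cmp phi) (sp_measure phi M) (sp_threshold phi).

Definition I_phi (R : realType) (nV : nat) (M : pMDP nV)
  (phi : spec R (pS M) (pAct M)) (u : param_space R nV) : R :=
  (models (instantiate M u) phi)%:R.

Definition sat_prob (R : realType) (nV : nat) (M : pMDP nV)
  (phi : spec R (pS M) (pAct M))
  (P : probability (param_space R nV) R) : \bar R :=
  (\int[P]_u (I_phi phi u)%:E)%E.

(* N samples U_0..U_{N-1} : Omega -> parameter space, drawn independently
   from P: each U_i is measurable and their joint law is the N-fold product
   P^N, i.e. Q(\bigcap_i U_i^{-1}(A_i)) = \prod_i P(A_i) for all measurable
   A_i (this also gives that each U_i has law P). *)
Definition iid_sample (R : realType) (nV N : nat) (dO : measure_display)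
  (Omega : measurableType dO) (Q : probability Omega R)
  (P : probability (param_space R nV) R)
  (U : 'I_N -> Omega -> param_space R nV) : Prop :=
  (forall i, measurable_fun setT (U i)) /\
  (forall A : 'I_N -> set (param_space R nV),
     (forall i, measurable (A i)) ->
     Q (\bigcap_(i in [set: 'I_N]) (U i @^-1` A i)) = (\prod_(i < N) P (A i))%E).

Definition num_violating (R : realType) (nV N : nat) (M : pMDP nV)
  (phi : spec R (pS M) (pAct M)) (Omega : Type)
  (U : 'I_N -> Omega -> param_space R nV) (w : Omega) : nat :=
  #|[set i : 'I_N | ~~ models (instantiate M (U i w)) phi]|.

Definition binom_tail (R : realType) (N k : nat) (t : R) : R :=
  \sum_(i < k.+1) ('C(N, i))%:R * (1 - t) ^+ i * t ^+ (N - i).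

Definition is_tstar (R : realType) (N : nat) (beta : R) (tstar : nat -> R) : Prop :=
  tstar N = 0 /\
  forall k, (k < N)%N ->
    0 <= tstar k <= 1 /\ (1 - beta) / N%:R = binom_tail N k (tstar k).

(* Let p be the probability that a sampled instantiation satisfies phi. The
   number of violating samples is binomially distributed: it equals k with
   probability C(N,k) (1-p)^k p^(N-k), which is at most binom_tail N k p. As
   binom_tail N k t is nondecreasing in t, each k with p < t*(k) has probability
   at most binom_tail N k (t*(k)) = (1-beta)/N, and k = N never qualifies since
   t*(N) = 0. So F < t*(N_viol) has probability at most N (1-beta)/N = 1-beta. *)

From HB Require Import structures.
From mathcomp Require Import all_boot all_order all_algebra.
From mathcomp Require Import all_classical all_reals all_analysis.
From mathcomp Require mpoly.
From mathcomp Require Import lra ring.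
Import Order.TTheory GRing.Theory Num.Theory.
Set Implicit Arguments.
Unset Strict Implicit.
Unset Printing Implicit Defensive.
Local Open Scope classical_set_scope.
Local Open Scope ring_scope.

Definition binom_term (R : pzRingType) (N : nat) (t : R) (i : nat) : R :=
  'C(N, i)%:R * (1 - t) ^+ i * t ^+ (N - i).

Section BinomialTail.
Variable R : realType.
Implicit Types (s t : R) (N k : nat).

Lemma binom_tailE N k t : binom_tail N k t = \sum_(i < k.+1) binom_term N t i.
Proof. by []. Qed.

Lemma binom_term_ge0 N t i : 0 <= t <= 1 -> 0 <= binom_term N t i.
Proof. by case/andP=> t0 t1; rewrite !mulr_ge0 ?exprn_ge0 ?subr_ge0. Qed.

Lemma binom_tail0n k t : binom_tail 0 k t = 1.
Proof.
rewrite binom_tailE big_ord_recl big1 => [|i _]; last by rewrite /binom_term bin0n !mul0r.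
by rewrite addr0 /binom_term !expr0 !mulr1.
Qed.

Lemma binom_tailn0 N t : binom_tail N 0 t = t ^+ N.
Proof. by rewrite binom_tailE big_ord1 /binom_term bin0 subn0 expr0 !mul1r. Qed.

Lemma binom_tailSS N k t :
  binom_tail N.+1 k.+1 t = t * binom_tail N k.+1 t + (1 - t) * binom_tail N k t.
Proof.
rewrite !binom_tailE big_ord_recl [in X in _ = t * X + _]big_ord_recl mulrDr -addrA.
congr (_ + _); first by rewrite /binom_term !bin0 !subn0 !expr0 exprS !mul1r.
rewrite !mulr_sumr -big_split; apply: eq_bigr => i _ /=.
rewrite /binom_term /bump /= !add1n binS natrD subSS.
have [iN|Ni] := ltnP i N; first rewrite -(subnSK iN) !exprS.
  by move: ((1 - t) ^+ i) (t ^+ (N - i.+1)) => a b; ring.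
rewrite (bin_small (_ : N < i.+1)%N) ?ltnS // exprS.
by move: ((1 - t) ^+ i) (t ^+ (N - i)) => a b; ring.
Qed.

Lemma binom_tail_ge0 N k t : 0 <= t <= 1 -> 0 <= binom_tail N k t.
Proof. by move=> t01; apply: sumr_ge0 => i _; apply: binom_term_ge0. Qed.

Lemma binom_term_le_tail N k t : 0 <= t <= 1 -> binom_term N t k <= binom_tail N k t.
Proof.
by move=> t01; rewrite binom_tailE big_ord_recr lerDr sumr_ge0 // => i _; apply: binom_term_ge0.
Qed.

Lemma binom_tail_leS N k t : 0 <= t <= 1 -> binom_tail N k t <= binom_tail N k.+1 t.
Proof. by move=> t01; rewrite [leRHS]binom_tailE big_ord_recr lerDl binom_term_ge0. Qed.

Lemma le_binom_tail N k s t : 0 <= s -> s <= t -> t <= 1 ->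
  binom_tail N k s <= binom_tail N k t.
Proof.
move=> s0 st t1; have t0 := le_trans s0 st; have s1 := le_trans st t1.
have t01 : 0 <= t <= 1 by rewrite t0 t1.
elim: N k => [|N IHN] [|k]; rewrite ?binom_tail0n //.
  by rewrite !binom_tailn0 lerXn2r // nnegrE.
rewrite !binom_tailSS; have := binom_tail_leS N k t01.
(* With A := binom_tail N k.+1 and B := binom_tail N k:
   s A(s) + (1-s) B(s) <= s A(t) + (1-s) B(t) <= t A(t) + (1-t) B(t), as B(t) <= A(t). *)
have := IHN k.+1; have := IHN k; nra.
Qed.

End BinomialTail.

Lemma sum_set_card (T : finType) (V : nmodType) (F : nat -> V) :
  \sum_(S : {set T}) F #|S| = \sum_(k < #|T|.+1) F k *+ 'C(#|T|, k).
Proof.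
have cardS (S : {set T}) : (#|S| < #|T|.+1)%N by rewrite ltnS max_card.
rewrite (partition_big (fun S : {set T} => Ordinal (cardS S)) predT) //=.
apply: eq_bigr => k _; rewrite (eq_bigr (fun _ => F k)) => [|S /eqP <- //].
by rewrite sumr_const -card_draws cardsE.
Qed.

Lemma fsbig_finType (V : Type) (idx : V) (op : Monoid.com_law idx) (I : finType)
    (P : pred I) (F : I -> V) :
  \big[op/idx]_(i \in [set i | P i]) F i = \big[op/idx]_(i | P i) F i.
Proof.
rewrite (fsbigE (enum P)) ?enum_uniq ?big_enum_cond //=.
- by apply: eq_bigl => i; rewrite mem_setE andbb.
- by move=> i /=; rewrite mem_enum.
- by move=> i /= Pi; rewrite mem_enum unfold_in Pi.
Qed.

Lemma integral_pred_indic d (T : measurableType d) (R : realType)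
    (mu : {measure set T -> \bar R}) (g : pred T) :
  measurable [set x | g x] -> (\int[mu]_x (g x)%:R%:E = mu [set x | g x])%E.
Proof.
move=> mg; rewrite -[X in mu X]setIT -integral_indic //.
by apply: eq_integral => x _; rewrite indicE mem_setE.
Qed.

Section IndependentSamples.
Context (R : realType) d (T : measurableType d) dO (Omega : measurableType dO).
Variables (N : nat) (Q : probability Omega R) (P : probability T R).
Variable U : 'I_N -> Omega -> T.
Hypothesis mU : forall i, measurable_fun setT (U i).
Hypothesis indepU : forall A : 'I_N -> set T, (forall i, measurable (A i)) ->
  Q (\bigcap_(i in [set: 'I_N]) (U i @^-1` A i)) = (\prod_(i < N) P (A i))%E.
Variable g : pred T.
Hypothesis mg : measurable [set x | g x].

Definition failures (w : Omega) : {set 'I_N} := [set i | ~~ g (U i w)].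

Let p := fine (P [set x | g x]).

Let PgE : P [set x | g x] = p%:E.
Proof. by rewrite fineK // fin_num_measure. Qed.

Let pattern (S : {set 'I_N}) (i : 'I_N) : set T :=
  if i \in S then ~` [set x | g x] else [set x | g x].

Let measurable_pattern S i : measurable (pattern S i).
Proof. by rewrite /pattern; case: ifP => _ //; apply: measurableC. Qed.

Lemma failures_eqE S :
  [set w | failures w = S] = \bigcap_(i in [set: 'I_N]) (U i @^-1` pattern S i).
Proof.
apply/seteqP; split => [w /= <- i _|w /= US].
  by rewrite /pattern inE; case: ifPn => [/negP|/negPn].
apply/setP => i; rewrite inE; have := US i I; rewrite /pattern.
by case: (i \in S) => /= [/negP|->].
Qed.

Lemma measurable_failures_eq S : measurable [set w | failures w = S].
Proof.
rewrite failures_eqE; apply: fin_bigcap_measurable => [|i _]; first exact: finite_finset.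
by rewrite -[X in measurable X]setTI; apply: mU.
Qed.

Lemma prob_failures_eq S :
  Q [set w | failures w = S] = ((1 - p) ^+ #|S| * p ^+ (N - #|S|))%:E.
Proof.
rewrite failures_eqE indepU // (eq_bigr (fun i => (if i \in S then 1 - p else p)%:E)).
  rewrite prodEFin (bigID (mem S)) /=; congr (_ * _)%:E.
    by rewrite -prodr_const; apply: eq_bigr => i ->.
  rewrite -[X in (X - _)%N](card_ord N) -(cardsC S) addKn -prodr_const.
  by apply: eq_big => [i|i /negbTE ->]; rewrite ?inE.
by move=> i _; rewrite /pattern; case: ifP => _; rewrite ?probability_setC // PgE.
Qed.

Lemma card_failures_bigcup (B : pred nat) :
  [set w | B #|failures w|] =
  \bigcup_(S in [set S : {set 'I_N} | B #|S|]) [set w | failures w = S].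
Proof.
by apply/seteqP; split => [w /= Bw|w [S /= BS ->//]]; exists (failures w).
Qed.

Lemma measurable_card_failures (B : pred nat) : measurable [set w | B #|failures w|].
Proof.
rewrite card_failures_bigcup; apply: fin_bigcup_measurable => [|S _].
  exact: finite_finset.
exact: measurable_failures_eq.
Qed.

Lemma prob_card_failures (B : pred nat) :
  Q [set w | B #|failures w|] = (\sum_(k < N.+1 | B k) binom_term N p k)%:E.
Proof.
rewrite card_failures_bigcup measure_fin_bigcup //; last first.
- by move=> S _; apply: measurable_failures_eq.
- by move=> S S' _ _ [w [/= <- <-]].
- exact: finite_finset.
rewrite fsbig_finType (eq_bigr _ (fun S _ => prob_failures_eq S)) sumEFin big_mkcond /=.
rewrite (@sum_set_card _ _ (fun k => if B k then (1 - p) ^+ k * p ^+ (N - k) else 0)).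
rewrite card_ord [in RHS]big_mkcond /=; congr EFin; apply: eq_bigr => k _.
by case: ifP => _; rewrite ?mul0rn // /binom_term -mulrA mulr_natl.
Qed.

End IndependentSamples.

Lemma binom_mass_below_tstar (R : realType) (N : nat) (beta p : R) (tstar : nat -> R) :
  (0 < N)%N -> beta <= 1 -> is_tstar N beta tstar -> 0 <= p <= 1 ->
  \sum_(k < N.+1 | p < tstar k) binom_term N p k <= 1 - beta.
Proof.
move=> N_gt0 beta_le1 [tstarN tstarP] /andP[p0 p1].
rewrite big_mkcond big_ord_recr /= tstarN ltNge p0 addr0.
have -> : 1 - beta = \sum_(k < N) (1 - beta) / N%:R.
  by rewrite sumr_const card_ord -[_ *+ N]mulr_natr divfK // pnatr_eq0 -lt0n.
apply: ler_sum => k _; have [/andP[_ t1] tstarE] := tstarP k (ltn_ord k).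
case: ifP => [pt|_]; last by rewrite divr_ge0 ?subr_ge0.
rewrite tstarE (le_trans (binom_term_le_tail _ _ _)) ?p0 ?p1 //.
exact: le_binom_tail (ltW pt) t1.
Qed.

Theorem theorem2 (R : realType) (nV : nat) (M : pMDP nV)
  (P : probability (param_space R nV) R)
  (phi : spec R (pS M) (pAct M))
  (N : nat) (dO : measure_display) (Omega : measurableType dO)
  (Q : probability Omega R) (U : 'I_N -> Omega -> param_space R nV)
  (beta : R) (tstar : nat -> R) :
  P [set u | well_defined_graph_preserving M u] = 1%E ->
  measurable [set u : param_space R nV | models (instantiate M u) phi] ->
  (1 <= N)%N ->
  iid_sample Q P U ->
  0 < beta < 1 ->
  is_tstar N beta tstar ->
  (beta%:E <= Q [set w | ((tstar (num_violating phi U w))%:E <= sat_prob phi P)%E])%E.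
Proof.
move=> _ mg N_gt0 [mU indepU] /andP[_ beta_lt1] tstarP.
pose g u := models (instantiate M u) phi.
have {}mg : measurable [set u | g u] := mg.
pose p := fine (P [set u | g u]).
have PgE : P [set u | g u] = p%:E by rewrite fineK ?fin_num_measure.
have p01 : 0 <= p <= 1 by rewrite -!lee_fin -PgE measure_ge0 probability_le1.
have -> : sat_prob phi P = p%:E by rewrite /sat_prob integral_pred_indic.
have -> : [set w | ((tstar (num_violating phi U w))%:E <= p%:E)%E] =
          ~` [set w | p < tstar #|failures U g w|].
  have nvE w : num_violating phi U w = #|failures U g w|.
    by apply: eq_card => i; rewrite inE unfold_in /= asboolb.
  by apply/seteqP; split => w; rewrite /= lee_fin leNgt nvE => /negP.
rewrite probability_setC; last exact: (measurable_card_failures mU mg (fun k => p < tstar k)).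
rewrite (prob_card_failures mU indepU mg (fun k => p < tstar k)) -/p -EFinB lee_fin.
have := binom_mass_below_tstar N_gt0 (ltW beta_lt1) tstarP p01; lra.
Qed.
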